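(* Let $n\geq 1$ be an integer and let $U$ be any $2^n\times 2^n$ unitary matrix, acting on $n$ qubits. Let $\rho$ be the $(n+1)$-qubit density matrix $$\rho=\frac{1}{2^{n+1}}\begin{pmatrix}\mathbb{1} & U^\dagger\\ U & \mathbb{1}\end{pmatrix},$$ written in block form with respect to the computational basis of the first (''clean'') qubit. For every $y\in\{0,1\}^n$, the multiplicative negativity $M_y$ of $\rho$ with respect to the bipartition $y$ satisfies $$M_y\leq \frac{5}{4}.$$
   Context: The state $\rho$ lives on one clean qubit tensored with $n$ further qubits, and $\mathbb{1}$ denotes the $2^n\times 2^n$ identity. For $y\in\{0,1\}^n$, let $\rho_y$ denote the partial transpose of $\rho$ taken over those non-clean qubits $i$ with $y_i=1$ (the clean qubit is never transposed); equivalently, if $U_y$ denotes the partial transpose of $U$ over the qubits $i$ with $y_i=1$, then $\rho_y=\frac{1}{2^{n+1}}\begin{pmatrix}\mathbb{1} & U_y^\dagger\\ U_y & \mathbb{1}\end{pmatrix}$. The multiplicative negativity for bipartition $y$ is $M_y=\sum_{\lambda\in\mathrm{spec}(\rho_y)}|\lambda|$, the sum of the absolute values of the eigenvalues of $\rho_y$ (counted with multiplicity). *)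

From HB Require Import structures.
From mathcomp Require Import all_boot all_order all_algebra.
From mathcomp Require Import sesquilinear spectral.
Set Implicit Arguments. Unset Strict Implicit. Unset Printing Implicit Defensive.
Import Order.TTheory GRing.Theory Num.Theory.
Local Open Scope ring_scope.
Local Open Scope sesquilinear_scope.

Definition bitn (a k : nat) : bool := odd (a %/ 2 ^ k).

Definition mixbits (n : nat) (y : 'I_n -> bool) (a b : nat) : nat :=
  (\sum_(k < n) (if y k then bitn b k else bitn a k) * 2 ^ k)%N.

Lemma sum_pow2_lt (n : nat) : (\sum_(k < n) 2 ^ k < 2 ^ n)%N.
Proof.
elim: n => [|n IH]; first by rewrite big_ord0.
rewrite big_ord_recr /= expnS mul2n -addnn ltn_add2r; exact: IH.
Qed.

Lemma mixbits_lt (n : nat) (y : 'I_n -> bool) (a b : nat) :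
  (mixbits y a b < 2 ^ n)%N.
Proof.
apply: leq_ltn_trans (sum_pow2_lt n); apply: leq_sum => k _.
by case: (y k); [case: (bitn b k)|case: (bitn a k)]; rewrite ?mul1n ?mul0n.
Qed.

Definition mixo (n : nat) (y : 'I_n -> bool) (a b : 'I_(2 ^ n)) : 'I_(2 ^ n) :=
  Ordinal (mixbits_lt y a b).

(* partial transpose of U over the qubits k with y k = true:
   <i| U_y |j> = <i'| U |j'>, where i' (resp. j') is i (resp. j)
   with the bits at the transposed positions taken from j (resp. i). *)
Definition ptrans (C : numClosedFieldType) (n : nat) (y : 'I_n -> bool)
  (U : 'M[C]_(2 ^ n)) : 'M[C]_(2 ^ n) :=
  \matrix_(i, j) U (mixo y i j) (mixo y j i).

Definition rho_y (C : numClosedFieldType) (n : nat) (y : 'I_n -> bool)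
  (U : 'M[C]_(2 ^ n)) : 'M[C]_(2 ^ n + 2 ^ n) :=
  (2 ^+ n.+1)^-1 *:
    block_mx 1%:M ((ptrans y U) ^t*) (ptrans y U) 1%:M.

Definition is_spectrum (C : numClosedFieldType) (m : nat) (A : 'M[C]_m)
  (s : seq C) : Prop :=
  char_poly A = \prod_(l <- s) ('X - l%:P).

(* multiplicative negativity: sum of |eigenvalues| (with multiplicity);
   well-defined since the root multiset of char_poly is unique *)
Definition mult_negativity (C : numClosedFieldType) (s : seq C) : C := \sum_(l <- s) `|l|.

From mathcomp Require Import all_boot all_order all_algebra.
From mathcomp Require Import sesquilinear spectral ring.
Set Implicit Arguments. Unset Strict Implicit. Unset Printing Implicit Defensive.
Import Order.TTheory GRing.Theory Num.Theory.
Local Open Scope ring_scope.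
Local Open Scope sesquilinear_scope.

(* Conjugating rho_y by diag(1, -1) turns it into c - rho_y with c = 2^-n, so
   its (real) spectrum is symmetric under l |-> c - l and
   2 M_y = sum_l (|l| + |c - l|).  Each summand is at most the parabola
   c + (2l - c)^2/(4c), whose sum over the 2^(n+1) eigenvalues only depends on
   tr rho_y = 1 and tr rho_y^2 = 2^-n (the partial transpose merely permutes
   the entries of U), and equals 5/2. *)

Lemma bitn_sum n (c : 'I_n -> bool) (j : 'I_n) :
  bitn (\sum_(k < n) c k * 2 ^ k) j = c j.
Proof.
elim: n c j => [|n IH] c j; first by case: j.
rewrite big_ord_recl /= expn0 muln1.
have -> : (\sum_(i < n) c (lift ord0 i) * 2 ^ bump 0 i
           = 2 * \sum_(i < n) c (lift ord0 i) * 2 ^ i)%N.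
  by rewrite big_distrr; apply: eq_bigr => i _; rewrite /bump add1n expnS mulnCA.
case: (unliftP ord0 j) => [j' ->|->] /=.
  rewrite /bitn /bump /= add1n expnS divnMA addnC mulnC divnMDl //.
  rewrite [(c ord0 %/ 2)%N]divn_small ?addn0; [exact: IH | by case: (c ord0)].
by rewrite /bitn divn1 oddD oddM /=; case: (c ord0).
Qed.

Lemma binary_expansion n a : (a < 2 ^ n)%N -> a = (\sum_(k < n) bitn a k * 2 ^ k)%N.
Proof.
elim: n a => [|n IH] a Ha.
  by rewrite big_ord0; move: Ha; rewrite expn0 ltnS leqn0 => /eqP.
rewrite big_ord_recl /= expn0 muln1.
have Ha2 : (a %/ 2 < 2 ^ n)%N by rewrite ltn_divLR // -expnSr.
rewrite {1}(divn_eq a 2) {1}(IH _ Ha2) modn2 /bitn expn0 divn1 addnC.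
congr (_ + _)%N; rewrite big_distrl; apply: eq_bigr => i _.
by rewrite /= /bump add1n expnS divnMA -mulnA (mulnC 2).
Qed.

Lemma bitn_mixbits n (y : 'I_n -> bool) a b (k : 'I_n) :
  bitn (mixbits y a b) k = if y k then bitn b k else bitn a k.
Proof. exact: (bitn_sum (fun k => if y k then bitn b k else bitn a k)). Qed.

Lemma mixoK n (y : 'I_n -> bool) (i j : 'I_(2 ^ n)) :
  mixo y (mixo y i j) (mixo y j i) = i.
Proof.
apply: val_inj; rewrite /= /mixbits [RHS](binary_expansion (ltn_ord i)).
by apply: eq_bigr => k _; rewrite !bitn_mixbits; case: (y k).
Qed.

Lemma mxtrace_mul_trmxC (C : numClosedFieldType) m (V : 'M[C]_m) :
  \tr (V *m V ^t*) = \sum_i \sum_j V i j * (V i j)^*.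
Proof. by apply: eq_bigr => i _; rewrite mxE; apply: eq_bigr => j _; rewrite !mxE. Qed.

Lemma mxtrace_ptrans_mul_trmxC (C : numClosedFieldType) n (y : 'I_n -> bool)
  (U : 'M[C]_(2 ^ n)) :
  \tr (ptrans y U *m (ptrans y U) ^t*) = \tr (U *m U ^t*).
Proof.
rewrite !mxtrace_mul_trmxC !pair_big /=.
pose f (p : 'I_(2 ^ n) * 'I_(2 ^ n)) := (mixo y p.1 p.2, mixo y p.2 p.1).
have fK : involutive f by case=> i j; rewrite /f /= !mixoK.
rewrite [RHS](reindex_inj (inv_inj fK)).
by apply: eq_bigr => p _; rewrite !mxE.
Qed.

Lemma char_poly_conj (F : fieldType) n (P A : 'M[F]_n) : P \in unitmx ->
  char_poly (invmx P *m A *m P) = char_poly A.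
Proof.
move=> Pu; rewrite /char_poly.
have -> : char_poly_mx (invmx P *m A *m P) =
    map_mx polyC (invmx P) *m char_poly_mx A *m map_mx polyC P.
  rewrite /char_poly_mx mulmxBr mulmxBl -!map_mxM mul_mx_scalar -scalemxAl.
  by rewrite -map_mxM mulVmx // map_mx1 scalemx1.
rewrite !det_mulmx mulrC mulrA -det_mulmx -map_mxM mulmxV //.
by rewrite map_mx1 det1 mul1r.
Qed.

Section Spectrum.
Variables (C : numClosedFieldType) (m : nat).

Lemma is_spectrum_size (A : 'M[C]_m) s : is_spectrum A s -> size s = m.
Proof. by move=> hs; have := size_char_poly A; rewrite hs size_prod_XsubC => -[]. Qed.

Lemma is_spectrum_perm_eq (A : 'M[C]_m) s t :
  is_spectrum A s -> is_spectrum A t -> perm_eq s t.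
Proof. by move=> hs ht; apply: prod_XsubC_eq; rewrite -hs -ht. Qed.

Lemma is_spectrum_conj_diag (P : 'M[C]_m) (d : 'rV[C]_m) : P \in unitmx ->
  is_spectrum (invmx P *m diag_mx d *m P) [seq d 0 i | i : 'I_m].
Proof.
move=> Pu; rewrite /is_spectrum char_poly_conj // char_poly_trig ?diag_mx_is_trig //.
by rewrite big_map big_enum; apply: eq_bigr => i _; rewrite mxE eqxx mulr1n.
Qed.

Variables (A : 'M[C]_m) (s : seq C).
Hypotheses (A_herm : A \is hermsymmx) (A_spec : is_spectrum A s).

Let P := spectralmx A.
Let d := spectral_diag A.
Let P_unit : P \in unitmx := spectral_unit A.
Let AE : A = invmx P *m diag_mx d *m P.
Proof. exact/orthomx_spectralP/hermitian_normalmx. Qed.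

Let s_eigs : perm_eq s [seq d 0 i | i : 'I_m].
Proof. by apply: is_spectrum_perm_eq A_spec _; rewrite AE; apply: is_spectrum_conj_diag. Qed.

Let sum_spectrum (f : C -> C) : \sum_(l <- s) f l = \sum_i f (d 0 i).
Proof. by rewrite (perm_big _ s_eigs) big_map big_enum. Qed.

Lemma hermitian_spectrum_real : {in s, forall l, l \is Num.real}.
Proof.
move=> l; rewrite (perm_mem s_eigs) => /mapP[i _ ->].
exact: (mxOverP (hermitian_spectral_diag_real A_herm)).
Qed.

Lemma hermitian_spectrum_mxtrace : \tr A = \sum_(l <- s) l.
Proof.
by rewrite sum_spectrum {1}AE mxtrace_mulC mulmxA mulmxV // mul1mx mxtrace_diag.
Qed.

Lemma hermitian_spectrum_mxtrace_sqr : \tr (A *m A) = \sum_(l <- s) l ^+ 2.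
Proof.
have -> : A *m A = invmx P *m (diag_mx d *m diag_mx d) *m P.
  by rewrite AE !mulmxA -[_ *m P *m invmx P]mulmxA mulmxV // mulmx1.
rewrite sum_spectrum mxtrace_mulC !mulmxA mulmxV // mul1mx mulmx_diag mxtrace_diag.
by apply: eq_bigr => i _; rewrite mxE expr2.
Qed.

Lemma hermitian_spectrum_reflect c : char_poly (c%:M - A) = char_poly A ->
  perm_eq s [seq c - l | l <- s].
Proof.
move=> refl; set e := const_mx c - d.
have cAE : c%:M - A = invmx P *m diag_mx e *m P.
  rewrite linearB /= diag_const_mx mulmxBr mulmxBl -AE.
  by rewrite mul_mx_scalar -scalemxAl mulVmx // scalemx1.
have e_spec : is_spectrum A [seq e 0 i | i : 'I_m].
  by rewrite /is_spectrum -refl cAE; apply: is_spectrum_conj_diag.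
apply: perm_trans (is_spectrum_perm_eq A_spec e_spec) _.
rewrite perm_sym; apply: perm_trans (perm_map _ s_eigs) _.
by rewrite -map_comp (@eq_map _ _ _ (e 0)) // => i; rewrite /= !mxE.
Qed.

End Spectrum.

Section DensityMatrix.
Variables (C : numClosedFieldType) (n : nat) (y : 'I_n -> bool) (U : 'M[C]_(2 ^ n)).

Let exp2_neq0 k : (2 ^+ k : C) != 0. Proof. by rewrite expf_neq0 // pnatr_eq0. Qed.

Lemma rho_y_hermitian : rho_y y U \is hermsymmx.
Proof.
rewrite qualifE /= expr0 scale1r; apply/eqP.
rewrite /rho_y linearZ /= map_mxZ tr_block_mx map_block_mx /= !trmx1 !map_mx1 trmxCK.
by rewrite fmorphV rmorphXn /= (conjC_nat _ 2%N).
Qed.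

Lemma mxtrace_rho_y : \tr (rho_y y U) = 1.
Proof.
rewrite /rho_y mxtraceZ mxtrace_block !mxtrace1 natrX.
by have := exp2_neq0 n; rewrite exprS => ?; field.
Qed.

Lemma mxtrace_rho_y_sqr : U \is unitarymx ->
  \tr (rho_y y U *m rho_y y U) = (2 ^+ n)^-1.
Proof.
move=> /unitarymxP U_unitary.
rewrite /rho_y -scalemxAl -scalemxAr scalerA mxtraceZ mulmx_block mxtrace_block.
rewrite !mul1mx !mxtraceD mxtrace_mulC mxtrace_ptrans_mul_trmxC U_unitary.
by rewrite mxtrace1 natrX; have := exp2_neq0 n; rewrite exprS => ?; field.
Qed.

Lemma char_poly_rho_y_reflect :
  char_poly ((2 ^+ n)^-1%:M - rho_y y U) = char_poly (rho_y y U).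
Proof.
pose J : 'M[C]_(2 ^ n + 2 ^ n) := block_mx 1%:M 0 0 (- 1%:M).
have JJ : J *m J = 1%:M.
  rewrite mulmx_block !mul1mx !mul0mx !mulmx0 !addr0 !add0r mulNmx mulmxN mul1mx.
  by rewrite opprK -scalar_mx_block.
have [J_unit _] := mulmx1_unit JJ.
have invJ : invmx J = J by rewrite -[invmx J]mulmx1 -JJ mulmxA mulVmx // mul1mx.
rewrite -(char_poly_conj (rho_y y U) J_unit) invJ; congr char_poly.
rewrite /rho_y -scalemxAr -scalemxAl !mulmx_block.
rewrite !mul1mx !mul0mx !mulmx0 !addr0 !add0r !mulNmx !mulmxN !mul1mx !mulmx1 opprK.
rewrite scalar_mx_block scale_block_mx opp_block_mx add_block_mx scale_block_mx.
rewrite !add0r !scalerN !scalemx1 -raddfB /=.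
by congr (block_mx _%:M _ _ _%:M); have := exp2_neq0 n; rewrite exprS => ?; field.
Qed.

End DensityMatrix.

Section ReflectionBound.
Variables (R : numFieldType) (c : R).
Hypothesis c_gt0 : 0 < c.

Let c_neq0 : c != 0. Proof. by rewrite gt_eqF. Qed.

(* For x in [0, c] the left side is c; outside it equals |2x - c|, and
   c + t^2/(4c) - |t| = (|t| - 2c)^2/(4c). *)
Lemma normr_add_normr_subr_le (x : R) : x \is Num.real ->
  `|x| + `|c - x| <= c + (2 * x - c) ^+ 2 / (4 * c).
Proof.
move=> xR; have cR : c \is Num.real by rewrite gtr0_real.
have sqr_div_ge0 (r : R) : r \is Num.real -> 0 <= r ^+ 2 / (4 * c).
  by move=> rR; rewrite divr_ge0 -?realEsqr // mulr_ge0 ?ler0n ?ltW.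
have le_of_gap (L r : R) : r \is Num.real ->
    c + (2 * x - c) ^+ 2 / (4 * c) - L = r ^+ 2 / (4 * c) ->
    L <= c + (2 * x - c) ^+ 2 / (4 * c).
  by move=> rR gapE; rewrite -subr_ge0 gapE sqr_div_ge0.
case: (real_ge0P xR) => hx; case: (real_ge0P (rpredB cR xR)) => hcx.
- by apply: (le_of_gap _ (2 * x - c)); [rewrite rpredB ?rpredM ?rpred_nat | field].
- by apply: (le_of_gap _ (2 * x - 3 * c)); [rewrite rpredB ?rpredM ?rpred_nat | field].
- by apply: (le_of_gap _ (2 * x + c)); [rewrite rpredD ?rpredM ?rpred_nat | field].
- by have := ltrD hx hcx; rewrite addr0 addrC subrK => /(lt_trans c_gt0); rewrite ltxx.
Qed.

Lemma sum_normr_le_of_reflection (s : seq R) :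
  {in s, forall x, x \is Num.real} ->
  perm_eq s [seq c - x | x <- s] ->
  \sum_(x <- s) x = 1 -> \sum_(x <- s) x ^+ 2 = c -> (size s)%:R * c = 2 ->
  \sum_(x <- s) `|x| <= 5%:R / 4%:R.
Proof.
move=> sR s_refl sum1 sum2 sizes.
have sum_refl : \sum_(x <- s) `|c - x| = \sum_(x <- s) `|x|.
  by rewrite [RHS](perm_big _ s_refl) big_map.
have bound : (\sum_(x <- s) `|x|) *+ 2 <=
    \sum_(x <- s) (c + (2 * x - c) ^+ 2 / (4 * c)).
  rewrite mulr2n -[X in _ + X <= _]sum_refl -big_split !big_seq.
  by apply: ler_sum => x xs; exact: normr_add_normr_subr_le (sR x xs).
have sum_bound : \sum_(x <- s) (c + (2 * x - c) ^+ 2 / (4 * c)) = 5%:R / 2%:R.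
  have termE (x : R) :
      c + (2 * x - c) ^+ 2 / (4 * c) = 5%:R / 4%:R * c + c^-1 * x ^+ 2 - x.
    by field.
  under eq_bigr do rewrite termE.
  rewrite sumrB big_split /= -!mulr_sumr sum1 sum2 big_const_seq count_predT.
  by rewrite iter_addr_0 -[c *+ _]mulr_natl sizes; field.
rewrite sum_bound in bound.
rewrite -(ler_pMn2r (n := 2)) // (_ : 5%:R / 4%:R *+ 2 = 5%:R / 2%:R) //.
by rewrite mulr2n; field.
Qed.

End ReflectionBound.

Theorem theorem1 (C : numClosedFieldType) (n : nat) (hn : (0 < n)%N)
  (U : 'M[C]_(2 ^ n)) (hU : U \is unitarymx) (y : 'I_n -> bool)
  (s : seq C) (hs : is_spectrum (rho_y y U) s) :
  mult_negativity s <= 5%:R / 4%:R.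
Proof.
(* The bound holds for n = 0 as well. *)
have rho_herm := rho_y_hermitian y U.
have exp2_neq0 : (2 ^+ n : C) != 0 by rewrite expf_neq0 // pnatr_eq0.
apply: (@sum_normr_le_of_reflection _ (2 ^+ n)^-1).
- by rewrite invr_gt0 exprn_gt0.
- exact: hermitian_spectrum_real rho_herm hs.
- exact: hermitian_spectrum_reflect rho_herm hs _ (char_poly_rho_y_reflect y U).
- by rewrite -(hermitian_spectrum_mxtrace rho_herm hs) mxtrace_rho_y.
- by rewrite -(hermitian_spectrum_mxtrace_sqr rho_herm hs) mxtrace_rho_y_sqr.
- by rewrite (is_spectrum_size hs) natrD natrX; field.
Qed.
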